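(* For all $\lambda\in[0,1]$ and $\Delta_1,\Delta_2,\Delta_3\in[0,\frac12]$, $C_{\mathrm{SKL}}((\mathrm{BSC}_{\Delta_1}\times\mathrm{BSC}_{\Delta_2}\times\mathrm{BSC}_{\Delta_3})\circ B_{4,\lambda})\le\lambda^2\sum_{i=1}^3C_{\mathrm{SKL}}(\mathrm{BSC}_{\Delta_i})$, and the inequality is strict when $0<\lambda<1$ and $\min\{\Delta_1,\Delta_2,\Delta_3\}<\frac12$.
   Context: $\mathrm{BSC}_\Delta:\{\pm\}\to\{\pm\}$ flips the input with probability $\Delta$. $B_{4,\lambda}:\{\pm\}\to\{\pm\}^3$ is the kernel $B_{4,\lambda}(x_1,x_2,x_3|y)=\lambda+\frac18(1-\lambda)$ if $x_1=x_2=x_3=y$ and $\frac18(1-\lambda)$ otherwise. $\times$ is the tensor product of channels. For a binary-input channel $P$, $C_{\mathrm{SKL}}(P)$ is the SKL information ($f$-information with $f(x)=(x-1)\log x$) between $X\sim\mathrm{Unif}(\{\pm\})$ and the output of $P$; in particular $C_{\mathrm{SKL}}(\mathrm{BSC}_\Delta)=\theta\,\mathrm{arctanh}\,\theta$ with $\theta=1-2\Delta$. *)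

From HB Require Import structures.
From mathcomp Require Import all_boot all_order all_algebra.
From mathcomp Require Import all_classical all_reals all_analysis.
Set Implicit Arguments. Unset Strict Implicit. Unset Printing Implicit Defensive.
Import Order.TTheory GRing.Theory Num.Theory.
Local Open Scope ring_scope.

(* A (finite-output) channel from I to O is a kernel W : I -> O -> R,
   W x y = probability of output y given input x.
   The binary alphabet {+,-} is encoded by bool (true = +, false = -). *)

Definition BSC (R : realType) (D : R) : bool -> bool -> R :=
  fun x y => if x == y then 1 - D else D.

Definition B4 (R : realType) (l : R) : bool -> bool * bool * bool -> R :=
  fun y x => if x == (y, y, y) then l + (1 - l) / 8 else (1 - l) / 8.

Definition tensor3 (R : realType) (I1 I2 I3 O1 O2 O3 : finType)
  (P1 : I1 -> O1 -> R) (P2 : I2 -> O2 -> R) (P3 : I3 -> O3 -> R)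
  : I1 * I2 * I3 -> O1 * O2 * O3 -> R :=
  fun x y => P1 x.1.1 y.1.1 * P2 x.1.2 y.1.2 * P3 x.2 y.2.

Definition chan_comp (R : realType) (I M O : finType)
  (Q : M -> O -> R) (P : I -> M -> R) : I -> O -> R :=
  fun x z => \sum_(m : M) P x m * Q m z.

(* One summand P_X(x) P_Y(y) f(P_XY(x,y) / (P_X(x) P_Y(y))) of the
   f-information, f(t) = (t-1) log t, with P_X uniform on bool:
   P_XY(x,y) = p/2 where p = W x y, and P_X(x) P_Y(y) = q/2 where
   q = P_Y(y) = (W true y + W false y)/2.  It equals (p - q)/2 * ln(p/q),
   with the standard conventions  0 * f(0/0) = 0  (q = 0) and
   f(0) = lim_{t->0+} f(t) = +oo  (p = 0 < q). *)
Definition skl_term (R : realType) (p q : R) : \bar R :=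
  if q == 0 then 0%E
  else if p == 0 then +oo%E
  else (((p - q) / 2) * ln (p / q))%:E.

Definition CSKL (R : realType) (O : finType) (W : bool -> O -> R) : \bar R :=
  (\sum_(x : bool) \sum_(y : O)
      skl_term (W x y) ((W true y + W false y) / 2))%E.

(* Put theta_i = 1 - 2 D_i; then C_SKL(BSC_{D_i}) = theta_i / 2 * ln((1-D_i)/D_i).
   When every D_i > 0, all transition probabilities of the composite channel W
   are positive and W x z = mix l (P_x(z)) / 8, where mix l p = 1 - l + l p and
   P_x(z) is 8 times the BSC likelihood of z given the repeated input (x,x,x).
   1. A monotonicity argument gives the scalar inequality
        (P-M)(ln mix P - ln mix M) <= l^2 (P-M)(ln P - ln M) + l(1-l)(P-M)^2.
   2. Summed over the 8 output words this yields C_SKL(W) <= l^3/2 X + l^2(1-l) Y,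
      with X = sum theta_i ln((1-D_i)/D_i) and Y = sum theta_i^2 + prod theta_i^2.
   3. From ln((1+t)/(1-t)) >= 2t + 2t^3/3 and 3abc <= a^2 + b^2 + c^2 on [0,1]
      we get X >= 2Y, strictly unless all theta_i vanish; since the target
      bound is l^2 X/2, the gap is l^2 (1-l)/2 (X - 2Y).
   The boundary cases are separate: for l = 0 the channel W forgets its input
   (both sides vanish), and a noiseless BSC (D_i = 0) makes the right-hand side
   +oo while C_SKL(W) stays finite for l < 1. *)

From HB Require Import structures.
From mathcomp Require Import all_boot all_order all_algebra.
From mathcomp Require Import all_classical all_reals all_analysis.
From mathcomp Require Import ring lra.
Import Order.TTheory GRing.Theory Num.Theory.
Local Open Scope ring_scope.

Section ScalarInequalities.
Context {R : realType}.
Implicit Types l t x y : R.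

Lemma derive_ge0_nondecr (f df : R -> R) (a b : R) :
  (forall x, a < x < b -> is_derive x 1 f (df x)) ->
  (forall x, a < x < b -> 0 <= df x) ->
  {in `]a, b[ &, {homo f : x y / x <= y}}.
Proof.
move=> fdf df_ge0.
have fder x : x \in `]a, b[ -> derivable f x 1.
  by rewrite in_itv => /fdf [].
apply: ger0_derive1_le_oo.
- exact: fder.
- move=> x; rewrite in_itv derive1E => xab.
  by have [_ ->] := fdf x xab; exact: df_ge0.
- move=> x; rewrite inE /= => xab.
  exact/differentiable_continuous/derivable1_diffP/fder.
Qed.

Lemma is_derive_congr (f g : R -> R) (x d d' : R) :
  f =1 g -> d = d' -> is_derive x 1 f d -> is_derive x 1 g d'.
Proof. by move=> /funext <- <-. Qed.

(* The affine map [x |-> 1 - l + l x] describing how B_{4,l} mixes the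
   noiseless likelihood (weight l) with the uniform one (weight 1 - l). *)
Definition mix l x := 1 - l + l * x.

Lemma mix_gt0 l x : 0 <= l <= 1 -> 0 < x -> 0 < mix l x.
Proof.
by move=> /andP[l0 l1] x0; have := mulr_ge0 l0 (ltW x0); rewrite /mix; nra.
Qed.

(* ln (mix l x) is compared with its "linearization" l ln x + l (1-l) (x - ln x);
   the excess has derivative l^2 (1-l) (x-1)^2 / (x mix l x) >= 0. *)
Definition mix_excess l x := l * ln x + l * (1 - l) * (x - ln x) - ln (mix l x).

Lemma mix_excess_derive l x : 0 <= l <= 1 -> 0 < x ->
  is_derive x 1 (mix_excess l)
    (l ^+ 2 * (1 - l) * (x - 1) ^+ 2 / (x * mix l x)).
Proof.
move=> hl x0; have mx0 := mix_gt0 _ _ hl x0.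
have dmix : is_derive x 1 (mix l) l.
  apply: is_derive_congr (is_deriveD (is_derive_cst (1 - l) x 1)
                                     (is_deriveZ l (is_derive_id x 1))) => //.
  by rewrite /GRing.scale /= add0r mulr1.
have dlnmix : is_derive x 1 (@ln R \o mix l) ((mix l x)^-1 * l).
  by apply: is_derive1_comp => //; exact: is_derive1_ln.
have dln : is_derive x 1 (@ln R) x^-1 by exact: is_derive1_ln.
have := is_deriveB (is_deriveD (is_deriveZ l dln)
  (is_deriveZ (l * (1 - l)) (is_deriveB (is_derive_id x 1) dln))) dlnmix.
apply: is_derive_congr => //.
by rewrite /GRing.scale /= /mix; field; rewrite -/(mix l x) !gt_eqF.
Qed.

Lemma nondecr_mul_ge0 {f : R -> R} {i : interval R} {x y : R} :
  {in i &, {homo f : u v / u <= v}} -> x \in i -> y \in i ->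
  0 <= (x - y) * (f x - f y).
Proof.
move=> f_nd xi yi; have [xy|yx] := leP x y.
  by apply: mulr_le0; rewrite subr_le0 //; exact: (f_nd x y xi yi xy).
apply: mulr_ge0; rewrite subr_ge0; first exact: ltW.
exact: (f_nd y x yi xi (ltW yx)).
Qed.

Lemma mix_log_le l (P M : R) : 0 <= l <= 1 -> 0 < P -> 0 < M ->
  (P - M) * (ln (mix l P) - ln (mix l M)) <=
  l ^+ 2 * ((P - M) * (ln P - ln M)) + l * (1 - l) * (P - M) ^+ 2.
Proof.
move=> hl P0 M0.
have excess_nd : {in `]0, P + M[ &, {homo mix_excess l : u v / u <= v}}.
  apply: (@derive_ge0_nondecr _
    (fun x => l ^+ 2 * (1 - l) * (x - 1) ^+ 2 / (x * mix l x))).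
    by move=> x /andP[x0 _]; exact: mix_excess_derive.
  move=> x /andP[x0 _]; case/andP: hl => l0 l1.
  have mx0 : 0 < mix l x by rewrite mix_gt0 // l0.
  apply: divr_ge0; last exact/ltW/mulr_gt0.
  apply: mulr_ge0; last exact: sqr_ge0.
  by rewrite mulr_ge0 ?sqr_ge0 ?subr_ge0.
have PI : P \in `]0, P + M[ by rewrite in_itv /= P0 /=; lra.
have MI : M \in `]0, P + M[ by rewrite in_itv /= M0 /=; lra.
rewrite -subr_ge0; apply: le_trans (nondecr_mul_ge0 excess_nd PI MI) _.
by rewrite /mix_excess le_eqVlt; apply/orP; left; apply/eqP; ring.
Qed.

(* The log-odds ln((1+t)/(1-t)) = 2 artanh t is at least its Taylor
   polynomial of degree 3 for 0 <= t < 1: the difference has derivative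
   2 t^4 / (1 - t^2) >= 0 and vanishes at 0. *)
Definition artanh_excess t := ln (1 + t) - ln (1 - t) - 2 * t - 2 / 3 * t ^+ 3.

Lemma artanh_excess_derive t : -1 < t < 1 ->
  is_derive t 1 artanh_excess (2 * t ^+ 4 / ((1 + t) * (1 - t))).
Proof.
move=> /andP[t1 t2].
have dsucc : is_derive t 1 (fun y => 1 + y) 1.
  by apply: is_derive_congr (is_deriveD (is_derive_cst (1 : R) t 1)
                                        (is_derive_id t 1)) => //; exact: add0r.
have dpred : is_derive t 1 (fun y => 1 - y) (-1).
  by apply: is_derive_congr (is_deriveB (is_derive_cst (1 : R) t 1)
                                        (is_derive_id t 1)) => //; exact: sub0r.
have dplus : is_derive t 1 (@ln R \o (fun y => 1 + y)) ((1 + t)^-1 * 1).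
  by apply: is_derive1_comp => //; apply: is_derive1_ln; lra.
have dminus : is_derive t 1 (@ln R \o (fun y => 1 - y)) ((1 - t)^-1 * -1).
  by apply: is_derive1_comp => //; apply: is_derive1_ln; lra.
have did := is_derive_id t (1 : R).
have := is_deriveB (is_deriveB (is_deriveB dplus dminus) (is_deriveZ 2 did))
                   (is_deriveZ (2 / 3) (is_deriveX 3 did)).
apply: is_derive_congr => //.
by rewrite /GRing.scale /=; field; apply/andP; split; rewrite gt_eqF //; lra.
Qed.

Lemma artanh_taylor_le t : 0 <= t < 1 ->
  2 * t + 2 / 3 * t ^+ 3 <= ln (1 + t) - ln (1 - t).
Proof.
move=> /andP[t0 t1].
have excess_nd : {in `]-1, 1[ &, {homo artanh_excess : u v / u <= v}}.
  apply: (@derive_ge0_nondecr _ (fun x => 2 * x ^+ 4 / ((1 + x) * (1 - x))))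
    => x hx.
    exact: artanh_excess_derive.
  case/andP: hx => x1 x2.
  apply: divr_ge0; first by rewrite mulr_ge0 // exprn_even_ge0.
  by apply: mulr_ge0; lra.
have : artanh_excess 0 <= artanh_excess t.
  by apply: excess_nd => //; rewrite in_itv /=; apply/andP; split; lra.
rewrite /artanh_excess addr0 subr0 ln1 subrr mulr0 expr0n /= mulr0 !subr0.
lra.
Qed.

(* For x, y, z in [0, 1]:  3xyz <= xy + yz + zx <= x^2 + y^2 + z^2. *)
Lemma three_prod_le {x y z : R} : 0 <= x <= 1 -> 0 <= y <= 1 -> 0 <= z <= 1 ->
  3 * (x * y * z) <= x ^+ 2 + y ^+ 2 + z ^+ 2.
Proof.
move=> /andP[x0 x1] /andP[y0 y1] /andP[z0 z1].
have xy_z : x * y * z <= x * y by rewrite ler_piMr // mulr_ge0.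
have xz_y : x * y * z <= x * z by rewrite mulrAC ler_piMr // mulr_ge0.
have yz_x : x * y * z <= y * z by rewrite -mulrA ler_piMl // mulr_ge0.
have := sqr_ge0 (x - y); have := sqr_ge0 (x - z); have := sqr_ge0 (y - z).
nra.
Qed.

Lemma three_prod_lt {x y z : R} : 0 <= x < 1 -> 0 <= y < 1 -> 0 <= z < 1 ->
  0 < x ^+ 2 + y ^+ 2 + z ^+ 2 -> 3 * (x * y * z) < x ^+ 2 + y ^+ 2 + z ^+ 2.
Proof.
move=> /andP[x0 x1] /andP[y0 y1] /andP[z0 z1] s0.
have [->|xyz0] := eqVneq (x * y * z) 0; first by rewrite mulr0.
have [xy0 z0'] : 0 < x * y /\ 0 < z.
  move: xyz0; rewrite !mulf_eq0 !negb_or => /andP[/andP[nx ny] nz].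
  by rewrite !lt_def mulf_neq0 // nz mulr_ge0.
have xy_z : x * y * z < x * y by rewrite gtr_pMr.
have xz_y : x * y * z <= x * z by rewrite mulrAC ler_piMr ?mulr_ge0 // ltW.
have yz_x : x * y * z <= y * z by rewrite -mulrA ler_piMl ?mulr_ge0 // ltW.
have := sqr_ge0 (x - y); have := sqr_ge0 (x - z); have := sqr_ge0 (y - z).
nra.
Qed.

Lemma log_odds_sum_ge {t1 t2 t3 c1 c2 c3 : R} :
  0 <= t1 -> 0 <= t2 -> 0 <= t3 ->
  2 * t1 + 2 / 3 * t1 ^+ 3 <= c1 -> 2 * t2 + 2 / 3 * t2 ^+ 3 <= c2 ->
  2 * t3 + 2 / 3 * t3 ^+ 3 <= c3 ->
  2 / 3 * ((t1 ^+ 2) ^+ 2 + (t2 ^+ 2) ^+ 2 + (t3 ^+ 2) ^+ 2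
           - 3 * (t1 ^+ 2 * t2 ^+ 2 * t3 ^+ 2)) <=
  t1 * c1 + t2 * c2 + t3 * c3
  - 2 * (t1 ^+ 2 + t2 ^+ 2 + t3 ^+ 2 + t1 ^+ 2 * t2 ^+ 2 * t3 ^+ 2).
Proof.
move=> t1_0 t2_0 t3_0 h1 h2 h3.
have scale (t c : R) : 0 <= t -> 2 * t + 2 / 3 * t ^+ 3 <= c ->
    2 * t ^+ 2 + 2 / 3 * (t ^+ 2) ^+ 2 <= t * c.
  move=> t0 htc; have := ler_wpM2l t0 htc.
  by congr (_ <= _); ring.
have := scale _ _ t1_0 h1; have := scale _ _ t2_0 h2; have := scale _ _ t3_0 h3.
lra.
Qed.
End ScalarInequalities.

Section SKLInformation.
Context {R : realType}.
Local Open Scope ereal_scope.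

Definition jeffreys (a b : R) : R := ((a - b) / 4 * (ln a - ln b))%R.

Lemma skl_term_pair (a b : R) : (0 < a)%R -> (0 < b)%R ->
  skl_term a ((a + b) / 2) + skl_term b ((a + b) / 2) = (jeffreys a b)%:E.
Proof.
move=> a0 b0; have q0 : (0 < (a + b) / 2)%R by rewrite divr_gt0 ?addr_gt0.
rewrite /skl_term /jeffreys !gt_eqF //= -EFinD; congr (_%:E).
by rewrite !ln_div ?posrE ?addr_gt0 //; field.
Qed.

Lemma CSKL_pos (O : finType) (W : bool -> O -> R) :
  (forall x y, 0 < W x y)%R ->
  CSKL W = (\sum_y jeffreys (W true y) (W false y))%:E.
Proof.
move=> Wpos; rewrite /CSKL big_bool /= -big_split /= -sumEFin.
by apply: eq_bigr => y _; rewrite skl_term_pair.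
Qed.

Lemma skl_term_ge0 (p q : R) : (0 <= p)%R -> (0 <= q)%R -> 0 <= skl_term p q.
Proof.
move=> p0 q0; rewrite /skl_term.
have [//|qn0] := eqVneq q 0%R; have [//|pn0] := eqVneq p 0%R.
have qpos : (0 < q)%R by rewrite lt_def qn0 q0.
have ppos : (0 < p)%R by rewrite lt_def pn0 p0.
rewrite lee_fin; have [qp|pq] := leP q p.
  rewrite mulr_ge0 ?divr_ge0 ?subr_ge0 //.
  by rewrite ln_ge0 // ler_pdivlMr // mul1r.
apply: mulr_le0; first by rewrite mulr_le0_ge0 // subr_le0 ltW.
by rewrite ln_le0 // ler_pdivrMr // mul1r ltW.
Qed.

Lemma CSKL_ge0 (O : finType) (W : bool -> O -> R) :
  (forall x y, 0 <= W x y)%R -> 0 <= CSKL W.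
Proof.
move=> Wge0; apply: sume_ge0 => x _; apply: sume_ge0 => y _.
by rewrite skl_term_ge0 // divr_ge0 // addr_ge0.
Qed.

Lemma jeffreys_mix_le (l P M : R) : (0 <= l <= 1)%R -> (0 < P)%R -> (0 < M)%R ->
  (jeffreys (mix l P / 8) (mix l M / 8) <=
   l / 32 * (l ^+ 2 * ((P - M) * (ln P - ln M)) + l * (1 - l) * (P - M) ^+ 2))%R.
Proof.
move=> hl P0 M0; have := mix_log_le _ _ _ hl P0 M0.
have l32 : (0 <= l / 32)%R by rewrite divr_ge0 //; case/andP: hl.
move=> /(ler_wpM2l l32); apply: le_trans; rewrite le_eqVlt; apply/orP; left.
by rewrite /jeffreys !ln_div ?posrE ?mix_gt0 //; apply/eqP; rewrite /mix; field.
Qed.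

End SKLInformation.

Lemma sum_pair (V : nmodType) (I J : finType) (F : I * J -> V) :
  \sum_(p : I * J) F p = \sum_(i : I) \sum_(j : J) F (i, j).
Proof. by rewrite (pair_bigA _ (fun i j => F (i, j))); apply: eq_bigr => -[]. Qed.

Lemma tensor3_col_sum {R : comNzRingType} {A B C : finType}
    (f : A -> R) (g : B -> R) (h : C -> R) :
  \sum_(m : A * B * C) f m.1.1 * g m.1.2 * h m.2 =
  (\sum_a f a) * (\sum_b g b) * (\sum_c h c).
Proof.
rewrite sum_pair sum_pair !mulr_suml; apply: eq_bigr => a _.
rewrite -mulrA mulr_suml mulr_sumr; apply: eq_bigr => b _.
by rewrite !mulr_sumr; apply: eq_bigr => c _; rewrite /= !mulrA.
Qed.

Section Channels.
Context {R : realType}.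

(* B_{4,l} is the mixture  l * (repetition code) + (1 - l) * (uniform noise),
   so any channel Q composed after it sees the input word (x, x, x) with
   weight l and the uniform word otherwise. *)
Lemma comp_B4 (O : finType) (Q : bool * bool * bool -> O -> R) (l : R) x z :
  chan_comp Q (B4 l) x z = l * Q (x, x, x) z + (1 - l) / 8 * \sum_m Q m z.
Proof.
rewrite /chan_comp (bigD1 (x, x, x)) //= [in RHS](bigD1 (x, x, x)) //=.
rewrite /B4 eqxx mulrDl mulrDr addrA; congr (_ + _).
by rewrite mulr_sumr; apply: eq_bigr => m /negbTE ->.
Qed.

Lemma BSC_col_sum (D : R) y : \sum_x BSC D x y = 1.
Proof. by rewrite big_bool /BSC; case: y; rewrite /= ?subrK // addrC subrK. Qed.

Lemma BSC3_comp_B4 (l D1 D2 D3 : R) x z :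
  chan_comp (tensor3 (BSC D1) (BSC D2) (BSC D3)) (B4 l) x z =
  mix l (8 * tensor3 (BSC D1) (BSC D2) (BSC D3) (x, x, x) z) / 8.
Proof.
rewrite comp_B4 /tensor3 (tensor3_col_sum (fun a => BSC D1 a z.1.1)
  (fun b => BSC D2 b z.1.2) (fun c => BSC D3 c z.2)) !BSC_col_sum /mix.
by field.
Qed.

Lemma BSC_theta_range {D : R} : 0 < D <= 1 / 2 -> 0 <= 1 - 2 * D < 1.
Proof. by move=> /andP[D0 D1]; apply/andP; split; lra. Qed.

Lemma BSC_gt0 (D : R) x y : 0 < D <= 1 / 2 -> 0 < BSC D x y.
Proof. by move=> /andP[D0 D1]; rewrite /BSC; case: (x == y) => //; lra. Qed.

Lemma BSC_ge0 (D : R) x y : 0 <= D <= 1 / 2 -> 0 <= BSC D x y.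
Proof. by move=> /andP[D0 D1]; rewrite /BSC; case: (x == y) => //; lra. Qed.

(* log ((1 - D) / D) = 2 artanh (1 - 2D): the log-likelihood ratio of a BSC. *)
Definition log_odds (D : R) := ln (1 - D) - ln D.

Definition sign (s : bool) : R := if s then 1 else -1.

Lemma BSC_log_ratio (D : R) s :
  ln (BSC D true s) - ln (BSC D false s) = sign s * log_odds D.
Proof. by case: s; rewrite /BSC /sign /log_odds /=; ring. Qed.

Lemma log_odds_taylor (D : R) : 0 < D <= 1 / 2 ->
  2 * (1 - 2 * D) + 2 / 3 * (1 - 2 * D) ^+ 3 <= log_odds D.
Proof.
move=> hD; have := artanh_taylor_le _ (BSC_theta_range hD).
have -> : 1 + (1 - 2 * D) = 2 * (1 - D) by ring.
have -> : 1 - (1 - 2 * D) = 2 * D by ring.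
case/andP: hD => D0 D1; rewrite /log_odds !lnM ?posrE //; last lra.
lra.
Qed.

Local Open Scope ereal_scope.

Lemma CSKL_BSC (D : R) : (0 < D <= 1 / 2)%R ->
  CSKL (BSC D) = ((1 - 2 * D) / 2 * log_odds D)%:E.
Proof.
move=> hD; rewrite CSKL_pos; last by move=> x y; apply: BSC_gt0.
by rewrite big_bool /jeffreys /BSC /log_odds /=; congr (_%:E); field.
Qed.

Lemma CSKL_BSC0 : CSKL (BSC (0 : R)) = +oo.
Proof.
rewrite /CSKL !big_bool /= /skl_term /BSC /= subr0 !addr0 !add0r oner_eq0 eqxx.
have -> : ((1 : R) / 2 == 0)%R = false by rewrite mul1r invr_eq0 pnatr_eq0.
by rewrite /= addey.
Qed.

End Channels.

Section NoisyBSCs.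
Context {R : realType}.
Variables (l D1 D2 D3 : R).
Hypothesis hl : 0 <= l <= 1.
Hypotheses (hD1 : 0 < D1 <= 1 / 2) (hD2 : 0 < D2 <= 1 / 2).
Hypothesis hD3 : 0 < D3 <= 1 / 2.

(* twice the sum of the SKL capacities of the three BSCs *)
Let X := (1 - 2 * D1) * log_odds D1 + (1 - 2 * D2) * log_odds D2
         + (1 - 2 * D3) * log_odds D3.
(* the quadratic error produced by the uniform part of B_{4,l} *)
Let Y := (1 - 2 * D1) ^+ 2 + (1 - 2 * D2) ^+ 2 + (1 - 2 * D3) ^+ 2
         + (1 - 2 * D1) ^+ 2 * (1 - 2 * D2) ^+ 2 * (1 - 2 * D3) ^+ 2.

Let sqr_range {t : R} : 0 <= t < 1 -> 0 <= t ^+ 2 < 1.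
Proof. by move=> /andP[t0 t1]; rewrite sqr_ge0 expr_lt1. Qed.

Let gap_lower_bound :
  2 / 3 * (((1 - 2 * D1) ^+ 2) ^+ 2 + ((1 - 2 * D2) ^+ 2) ^+ 2
           + ((1 - 2 * D3) ^+ 2) ^+ 2
           - 3 * ((1 - 2 * D1) ^+ 2 * (1 - 2 * D2) ^+ 2 * (1 - 2 * D3) ^+ 2))
  <= X - 2 * Y.
Proof.
case/andP: (BSC_theta_range hD1) => t1_0 _.
case/andP: (BSC_theta_range hD2) => t2_0 _.
case/andP: (BSC_theta_range hD3) => t3_0 _.
exact: log_odds_sum_ge t1_0 t2_0 t3_0 (log_odds_taylor _ hD1)
  (log_odds_taylor _ hD2) (log_odds_taylor _ hD3).
Qed.

Lemma BSC_skl_gap_ge0 : 2 * Y <= X.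
Proof.
have sq (D : R) : 0 < D <= 1 / 2 -> 0 <= (1 - 2 * D) ^+ 2 <= 1.
  move=> hD; have /andP[s0 s1] := sqr_range (BSC_theta_range hD).
  by rewrite s0 ltW.
have := three_prod_le (sq _ hD1) (sq _ hD2) (sq _ hD3).
have := gap_lower_bound; lra.
Qed.

Lemma BSC_skl_gap_gt0 : Num.min (Num.min D1 D2) D3 < 1 / 2 -> 2 * Y < X.
Proof.
move=> min_lt.
have pos_sum : 0 < ((1 - 2 * D1) ^+ 2) ^+ 2 + ((1 - 2 * D2) ^+ 2) ^+ 2
                   + ((1 - 2 * D3) ^+ 2) ^+ 2.
  have pow4_gt0 (D : R) : D < 1 / 2 -> 0 < ((1 - 2 * D) ^+ 2) ^+ 2.
    by move=> D_lt; rewrite !exprn_gt0 //; lra.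
  have := sqr_ge0 ((1 - 2 * D1) ^+ 2); have := sqr_ge0 ((1 - 2 * D2) ^+ 2).
  have := sqr_ge0 ((1 - 2 * D3) ^+ 2).
  by move: min_lt; rewrite !gt_min => /orP[/orP[]|] /pow4_gt0; lra.
have := three_prod_lt (sqr_range (BSC_theta_range hD1))
  (sqr_range (BSC_theta_range hD2)) (sqr_range (BSC_theta_range hD3)) pos_sum.
have := gap_lower_bound; lra.
Qed.

Let W := chan_comp (tensor3 (BSC D1) (BSC D2) (BSC D3)) (B4 l).
Let lik (x : bool) z := 8 * tensor3 (BSC D1) (BSC D2) (BSC D3) (x, x, x) z.

Lemma lik_gt0 x z : 0 < lik x z.
Proof. by rewrite /lik /tensor3 !mulr_gt0 ?BSC_gt0. Qed.

Lemma lik_log_ratio z : ln (lik true z) - ln (lik false z) =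
  sign z.1.1 * log_odds D1 + sign z.1.2 * log_odds D2 + sign z.2 * log_odds D3.
Proof.
rewrite -!BSC_log_ratio /lik /tensor3 /= !lnM ?posrE ?mulr_gt0 ?BSC_gt0 //.
ring.
Qed.

Lemma sum_letter_bounds :
  \sum_z l / 32 * (l ^+ 2 * ((lik true z - lik false z) *
         (ln (lik true z) - ln (lik false z)))
       + l * (1 - l) * (lik true z - lik false z) ^+ 2) =
  l ^+ 3 / 2 * X + l ^+ 2 * (1 - l) * Y.
Proof.
under eq_bigr => z _ do rewrite lik_log_ratio.
rewrite sum_pair sum_pair !big_bool /lik /tensor3 /BSC /sign /X /Y /=.
by field.
Qed.

Lemma CSKL_BSC3_B4_le : (CSKL W <= (l ^+ 3 / 2 * X + l ^+ 2 * (1 - l) * Y)%:E)%E.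
Proof.
have W_mix x z : W x z = mix l (lik x z) / 8 by exact: BSC3_comp_B4.
rewrite CSKL_pos; last by move=> x z; rewrite W_mix divr_gt0 ?mix_gt0 ?lik_gt0.
rewrite lee_fin -sum_letter_bounds; apply: ler_sum => z _.
by rewrite !W_mix jeffreys_mix_le ?lik_gt0.
Qed.

Let CSKL_BSC_sum :
  (CSKL (BSC D1) + CSKL (BSC D2) + CSKL (BSC D3) = (X / 2)%:E)%E.
Proof. by rewrite !CSKL_BSC // -!EFinD /X; congr (_%:E); field. Qed.

Let contraction_gap :
  l ^+ 2 * (X / 2) - (l ^+ 3 / 2 * X + l ^+ 2 * (1 - l) * Y) =
  l ^+ 2 * (1 - l) / 2 * (X - 2 * Y).
Proof. by field. Qed.

Lemma CSKL_BSC3_B4_contract :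
  (CSKL W <= (l ^+ 2)%:E * (CSKL (BSC D1) + CSKL (BSC D2) + CSKL (BSC D3)))%E.
Proof.
rewrite CSKL_BSC_sum -EFinM; apply: le_trans CSKL_BSC3_B4_le _.
rewrite lee_fin -subr_ge0 contraction_gap; case/andP: hl => l0 l1.
by rewrite !mulr_ge0 ?sqr_ge0 ?subr_ge0 ?BSC_skl_gap_ge0.
Qed.

Lemma CSKL_BSC3_B4_contract_strict : 0 < l < 1 ->
  Num.min (Num.min D1 D2) D3 < 1 / 2 ->
  (CSKL W < (l ^+ 2)%:E * (CSKL (BSC D1) + CSKL (BSC D2) + CSKL (BSC D3)))%E.
Proof.
move=> /andP[l0 l1] min_lt.
rewrite CSKL_BSC_sum -EFinM; apply: le_lt_trans CSKL_BSC3_B4_le _.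
rewrite lte_fin -subr_gt0 contraction_gap.
by rewrite !mulr_gt0 ?exprn_gt0 ?subr_gt0 ?BSC_skl_gap_gt0.
Qed.

End NoisyBSCs.

Section Boundary.
Context {R : realType}.
Local Open Scope ereal_scope.

(* For l < 1 the uniform part of B_{4,l} makes every transition probability
   positive, so the SKL information of the composite channel is finite. *)
Lemma CSKL_BSC3_B4_finite (l D1 D2 D3 : R) : (0 <= l < 1)%R ->
  (0 <= D1 <= 1 / 2)%R -> (0 <= D2 <= 1 / 2)%R -> (0 <= D3 <= 1 / 2)%R ->
  CSKL (chan_comp (tensor3 (BSC D1) (BSC D2) (BSC D3)) (B4 l)) < +oo.
Proof.
move=> /andP[l0 l1] h1 h2 h3; rewrite CSKL_pos ?ltry // => x z.
have lik_ge0 : (0 <= tensor3 (BSC D1) (BSC D2) (BSC D3) (x, x, x) z)%R.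
  by rewrite /tensor3 !mulr_ge0 ?BSC_ge0.
rewrite BSC3_comp_B4 /mix; have := mulr_ge0 l0 (mulr_ge0 (ler0n _ 8) lik_ge0).
lra.
Qed.

(* With l = 0 the output is independent of the input. *)
Lemma CSKL_BSC3_B40 (D1 D2 D3 : R) :
  (0 <= D1 <= 1 / 2)%R -> (0 <= D2 <= 1 / 2)%R -> (0 <= D3 <= 1 / 2)%R ->
  CSKL (chan_comp (tensor3 (BSC D1) (BSC D2) (BSC D3)) (B4 0)) = 0.
Proof.
move=> h1 h2 h3; rewrite CSKL_pos; last first.
  by move=> x z; rewrite BSC3_comp_B4 /mix mul0r subr0 addr0 divr_gt0.
rewrite big1 // => z _.
by rewrite !BSC3_comp_B4 /mix !mul0r /jeffreys subrr !mul0r.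
Qed.

Lemma CSKL_BSC_sum_pinfty (D1 D2 D3 : R) :
  (0 <= D1 <= 1 / 2)%R -> (0 <= D2 <= 1 / 2)%R -> (0 <= D3 <= 1 / 2)%R ->
  (D1 = 0 \/ D2 = 0 \/ D3 = 0)%R ->
  CSKL (BSC D1) + CSKL (BSC D2) + CSKL (BSC D3) = +oo.
Proof.
move=> h1 h2 h3 hz.
have nneg (D : R) : (0 <= D <= 1 / 2)%R -> 0 <= CSKL (BSC D).
  by move=> hD; apply: CSKL_ge0 => x y; exact: BSC_ge0.
have ninf (e : \bar R) : 0 <= e -> e != -oo by case: e.
case: hz => [->|[->|->]]; rewrite CSKL_BSC0.
- by rewrite addye ?ninf ?nneg // addye ?ninf ?nneg.
- by rewrite addey ?ninf ?nneg // addye ?ninf ?nneg.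
- by rewrite addey // ninf // adde_ge0 ?nneg.
Qed.

End Boundary.

Theorem mainTheorem11 (R : realType) (l D1 D2 D3 : R) :
  0 <= l <= 1 ->
  0 <= D1 <= 1 / 2 -> 0 <= D2 <= 1 / 2 -> 0 <= D3 <= 1 / 2 ->
  (CSKL (chan_comp (tensor3 (BSC D1) (BSC D2) (BSC D3)) (B4 l))
     <= (l ^+ 2)%:E * (CSKL (BSC D1) + CSKL (BSC D2) + CSKL (BSC D3)))%E /\
  (0 < l < 1 -> Num.min (Num.min D1 D2) D3 < 1 / 2 ->
   (CSKL (chan_comp (tensor3 (BSC D1) (BSC D2) (BSC D3)) (B4 l))
     < (l ^+ 2)%:E * (CSKL (BSC D1) + CSKL (BSC D2) + CSKL (BSC D3)))%E).
Proof.
move=> hl h1 h2 h3.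
have [->|l_neq0] := eqVneq l 0.
  rewrite CSKL_BSC3_B40 // expr0n /= mul0e.
  by split=> // /andP[]; rewrite ltxx.
have noisy_or_clean (D : R) : 0 <= D <= 1 / 2 -> D = 0 \/ 0 < D <= 1 / 2.
  case/andP=> D0 D1'; have [->|D_neq0] := eqVneq D 0; first by left.
  by right; rewrite lt_def D_neq0 D0 D1'.
have [[k1 k2 k3]|Dzero] : [/\ 0 < D1 <= 1 / 2, 0 < D2 <= 1 / 2 & 0 < D3 <= 1 / 2]
    \/ (D1 = 0 \/ D2 = 0 \/ D3 = 0).
  case: (noisy_or_clean _ h1) => [?|k1]; first by right; left.
  case: (noisy_or_clean _ h2) => [?|k2]; first by right; right; left.
  case: (noisy_or_clean _ h3) => [?|k3]; first by right; right; right.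
  by left.
  by split; [exact: CSKL_BSC3_B4_contract | exact: CSKL_BSC3_B4_contract_strict].
have l_gt0 : 0 < l by rewrite lt_def l_neq0; case/andP: hl.
rewrite CSKL_BSC_sum_pinfty // gt0_muley ?lte_fin ?exprn_gt0 //.
split=> [|/andP[_ l1] _]; first exact: leey.
by rewrite CSKL_BSC3_B4_finite // (ltW l_gt0).
Qed.
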